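(* Let $\langle B,\wedge,{}'\rangle$ be an algebra with $\wedge$ binary and ${}'$ unary satisfying $x\wedge(y\wedge z)\approx (y\wedge x)\wedge z$ and $x\approx (x'\wedge y)'\wedge(x'\wedge y')'$. Then $x\wedge(y\wedge u)=x\wedge(u\wedge y)$ for all $x,y,u\in B$. *)

(* Write x' for c x and juxtaposition for meet.  The second identity presents
   every x as (x'y)'(x'y')'; combined with the first it yields x'x = xx', then
   x''x = xx'', x'x'' = xx' and xx'' = xx.
   Substituted into the second identity at (x', x) these give x' = (xx)'(xx')',
   whose instance at x' is the right-hand side of the second identity at (x, x'),
   so x'' = x.  With ' an involution the second identity also reads
   x' = (xy)'(xy')', from which x(xy) = y(xx) and then x'y' = y'x' follow:
   meet is commutative, and the claim is an instance of commutativity. *)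


Section MeetComplAlgebra.

Variables (B : Type) (meet : B -> B -> B) (c : B -> B).

Local Infix "⊓" := meet (at level 40, left associativity).
Local Notation "x ^c" := (c x) (at level 2, left associativity, format "x ^c").

Hypothesis meet_swapA : forall x y z : B, x ⊓ (y ⊓ z) = y ⊓ x ⊓ z.
Hypothesis compl_split : forall x y : B, x = (x^c ⊓ y)^c ⊓ (x^c ⊓ y^c)^c.

Lemma meet_expand (x y z : B) : x ⊓ y = (x^c ⊓ z^c)^c ⊓ ((x^c ⊓ z)^c ⊓ y).
Proof. now rewrite meet_swapA, <- compl_split. Qed.

Lemma meet_self_swap_of_factor (k x y : B) : k ⊓ x = x ⊓ y -> x ⊓ (x ⊓ y) = y ⊓ (x ⊓ x).
Proof.
  intros kx_eq.
  rewrite (meet_swapA y x x), <- kx_eq.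
  apply meet_swapA.
Qed.

Lemma compl_meet_self_swap (x y : B) : x^c ⊓ (x^c ⊓ y) = y ⊓ (x^c ⊓ x^c).
Proof.
  apply (meet_self_swap_of_factor ((x^c ⊓ y)^c ⊓ (x^c ⊓ y^c))^c).
  pose proof (compl_split (x^c ⊓ y) (x^c ⊓ y^c)).
  congruence.
Qed.

Lemma split_r_meet_swap (x y z : B) : (x^c ⊓ y^c)^c ⊓ (z ⊓ x) = x ⊓ (z ⊓ (x^c ⊓ y^c)^c).
Proof.
  pose proof (meet_expand x (z ⊓ (x^c ⊓ y^c)^c) y).
  congruence.
Qed.

Lemma meet_complC (x : B) : x^c ⊓ x = x ⊓ x^c.
Proof.
  pose proof (compl_split (x^c ⊓ x) (x^c ⊓ x^c)).
  pose proof (compl_meet_self_swap x (x^c ⊓ x)^c).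
  pose proof (compl_split x (x^c ⊓ (x^c ⊓ x)^c)).
  congruence.
Qed.

Lemma meet_compl_swap (x y : B) : x ⊓ (y ⊓ y^c) = y ⊓ (y^c ⊓ x).
Proof.
  pose proof (compl_split (y^c ⊓ x) (y^c ⊓ x^c)).
  pose proof (meet_complC y).
  pose proof (meet_complC y^c).
  pose proof (split_r_meet_swap y y^c (((y^c ⊓ x)^c ⊓ (y^c ⊓ x^c))^c ⊓ (y^c^c ⊓ y)^c)).
  congruence.
Qed.

Lemma meet_ccomplC (x : B) : x^c^c ⊓ x = x ⊓ x^c^c.
Proof.
  pose proof (meet_complC x^c).
  pose proof (meet_compl_swap (x^c^c ⊓ x)^c x^c).
  pose proof (meet_expand (x^c^c ⊓ x) (x^c ⊓ (x^c^c ⊓ (x^c^c ⊓ x)^c)^c)^c (x^c^c ⊓ x^c)).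
  congruence.
Qed.

Lemma meet_ccompl_split_absorb (x : B) : x ⊓ ((x^c^c ⊓ x)^c ⊓ (x ⊓ x^c)^c) = x ⊓ x^c.
Proof.
  pose proof (meet_swapA ((x^c ⊓ x)^c ⊓ (x^c^c ⊓ x^c^c)^c) (x^c ⊓ x^c)^c (x^c ⊓ x^c^c)^c).
  pose proof (meet_expand x^c x x^c).
  pose proof (meet_complC x^c).
  pose proof (compl_meet_self_swap (x^c ⊓ x) (x^c ⊓ x^c)^c).
  congruence.
Qed.

Lemma compl_ccompl_meet (x : B) : x^c ⊓ x^c^c = x ⊓ x^c.
Proof.
  pose proof (meet_complC x^c).
  pose proof (meet_ccompl_split_absorb x^c).
  pose proof (meet_ccomplC x^c).
  pose proof (meet_expand x^c ((x^c ⊓ x^c^c^c)^c ⊓ (x^c ⊓ x^c^c)^c) x^c).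
  pose proof (meet_expand x^c ((x^c ⊓ x^c)^c ⊓ (x^c ⊓ x^c^c)^c) x).
  congruence.
Qed.

Lemma meet_ccompl (x : B) : x ⊓ x^c^c = x ⊓ x.
Proof.
  pose proof (compl_meet_self_swap (x^c ⊓ x^c^c) (x^c ⊓ x^c^c^c)^c).
  pose proof (meet_complC x^c^c).
  pose proof (meet_ccomplC x^c).
  pose proof (compl_ccompl_meet x^c).
  congruence.
Qed.

Lemma compl_self_split (x : B) : x^c = (x ⊓ x)^c ⊓ (x ⊓ x^c)^c.
Proof.
  rewrite <- (meet_ccompl x), <- meet_ccomplC, <- compl_ccompl_meet, <- meet_complC.
  apply compl_split.
Qed.

Lemma complK (x : B) : x^c^c = x.
Proof.
  rewrite (compl_self_split x^c).
  symmetry; apply compl_split.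
Qed.
Lemma compl_splitK (x y : B) : x^c = (x ⊓ y)^c ⊓ (x ⊓ y^c)^c.
Proof. now rewrite (compl_split x^c y), complK. Qed.

Lemma meet_self_swap (x y : B) : x ⊓ (x ⊓ y) = y ⊓ (x ⊓ x).
Proof.
  apply (meet_self_swap_of_factor ((x ⊓ y)^c ⊓ (x ⊓ y^c))^c).
  pose proof (compl_split (x ⊓ y) (x ⊓ y^c)).
  pose proof (compl_splitK x y).
  pose proof (complK x).
  congruence.
Qed.

Lemma meetC_compl (x y : B) : x^c ⊓ y^c = y^c ⊓ x^c.
Proof.
  pose proof (compl_splitK y (y ⊓ x)^c).
  pose proof (meet_self_swap y x).
  pose proof (compl_splitK x (y ⊓ y)^c).
  pose proof (complK (y ⊓ x)).
  pose proof (complK (y ⊓ y)).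
  congruence.
Qed.

Lemma meetC (x y : B) : x ⊓ y = y ⊓ x.
Proof.
  rewrite <- (complK x), <- (complK y).
  apply meetC_compl.
Qed.
End MeetComplAlgebra.

Theorem lemma6p12 (B : Type) (meet : B -> B -> B) (c : B -> B)
  (H1 : forall x y z : B, meet x (meet y z) = meet (meet y x) z)
  (H2 : forall x y : B, x = meet (c (meet (c x) y)) (c (meet (c x) (c y)))) :
  forall x y u : B, meet x (meet y u) = meet x (meet u y).
Proof.
  intros x y u.
  now rewrite (meetC B meet c H1 H2 y u).
Qed.
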